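(* Fix integers $CW_{min}\ge 1$, $CW_{max}\ge CW_{min}$ and a retry limit $RL\ge 1$, and set $CW_0=CW_{min}$, $CW_i=\min\{CW_{max},2CW_{i-1}\}$ for $i>0$. Consider a single station operating in discrete virtual slots $t=0,1,2,\dots$ in the idealized regime of infinitely many contending stations, in which every transmission of the station collides. The station's retry counter starts at $0$; it makes its first transmission in a slot chosen uniformly at random from $\{0,1,\dots,CW_0-1\}$. Each transmission collides and increases the retry counter by one; if a transmission in slot $i$ raises the counter to a value $r<RL$, the next transmission takes place in slot $i+K$, where $K$ is uniform on $\{1,\dots,CW_r\}$ and independent of the past; once the counter reaches $RL$ the station makes no further transmissions. Define $a(t,r)$ for integers $t$ and $r\ge 0$ by $a(t,r)=0$ for $t<0$ and, for $t\ge 0$, $$a(t,r)=\begin{cases}\frac{1}{CW_0}, & r=0,\ 0\le t<CW_0,\\ 0, & r=0,\ t\ge CW_0,\\ 0, & r\ge RL,\\ \frac{1}{CW_r}\sum_{i=t-CW_r}^{t-1}a(i,r-1), & 0<r<RL,\end{cases}$$ and $$b(t,r)=\begin{cases}1-\sum_{i=0}^{t-1}a(i,r), & r=0,\\ \sum_{i=0}^{t-1}\bigl(a(i,r-1)-a(i,r)\bigr), & r>0.\end{cases}$$ Let $\Pr(TX\mid t,r)$ denote the probability that the station transmits in slot $t$, conditioned on the event that at the beginning of slot $t$ its retry counter equals $r$ (i.e. it has made exactly $r$ transmissions before slot $t$). Then, whenever $b(t,r)>0$, $$\Pr(TX\mid t,r)=\frac{a(t,r)}{b(t,r)}.$$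
   Context: This models the truncated binary exponential backoff of IEEE 802.11 (EDCA) for one station. Time is measured in virtual slots (the intervals between consecutive backoff-counter changes), so the backoff value drawn after a transmission determines directly the number of slots until the next attempt. The limit of infinitely many stations is interpreted as: the probability that a transmission of the station collides equals the probability that it transmits, i.e. every transmission collides. In this model $a(t,r)$ is the probability that the station transmits in slot $t$ with retry counter $r$, and $b(t,r)$ is the probability that its retry counter equals $r$ at the beginning of slot $t$. *)

From HB Require Import structures.
From mathcomp Require Import all_boot all_order all_algebra.
Unset Strict Implicit. Unset Printing Implicit Defensive.
Import Order.TTheory GRing.Theory Num.Theory.
Local Open Scope ring_scope.

Fixpoint CW (CWmin CWmax : nat) (i : nat) : nat :=
  match i with
  | 0 => CWmin
  | i'.+1 => minn CWmax (2 * CW CWmin CWmax i')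
  end.

Fixpoint a_fun (R : realFieldType) (CWmin CWmax RL : nat) (r : nat) (t : int) : R :=
  if t < 0 then 0 else
  match r with
  | 0 => if t < (CWmin : int) then (CWmin%:R)^-1 else 0
  | r'.+1 =>
      if (RL <= r'.+1)%N then 0
      else ((CW CWmin CWmax r'.+1)%:R)^-1 *
           \sum_(k < CW CWmin CWmax r'.+1)
              a_fun R CWmin CWmax RL r' (t - (CW CWmin CWmax r'.+1 : int) + (k : int))
              (* i ranges over t - CW_r, ..., t - 1 *)
  end.

Definition b_fun (R : realFieldType) (CWmin CWmax RL : nat) (t r : nat) : R :=
  match r with
  | 0 => 1 - \sum_(i < t) a_fun R CWmin CWmax RL 0 (i : int)
  | r'.+1 => \sum_(i < t) (a_fun R CWmin CWmax RL r' (i : int)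
                           - a_fun R CWmin CWmax RL r'.+1 (i : int))
  end.

(* An outcome lists the RL backoff draws K_0, ..., K_{RL-1}, each in [0, CWmax]. *)
Definition outcome (CWmax RL : nat) := {ffun 'I_RL -> 'I_CWmax.+1}.

Definition valid_draw (CWmin CWmax : nat) (j : nat) (k : nat) : bool :=
  if j == 0%N then (k < CW CWmin CWmax 0)%N
  else (1 <= k <= CW CWmin CWmax j)%N.

Definition weight (R : realFieldType) (CWmin CWmax RL : nat)
    (w : outcome CWmax RL) : R :=
  \prod_(j < RL)
     (if valid_draw CWmin CWmax j (w j) then ((CW CWmin CWmax j)%:R)^-1 else 0).

Definition Pr (R : realFieldType) (CWmin CWmax RL : nat)
    (E : pred (outcome CWmax RL)) : R :=
  \sum_(w | E w) weight R CWmin CWmax RL w.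

(* Slot of the j-th transmission (j = 0..RL-1): K_0 + K_1 + ... + K_j.
   After the RL-th transmission the counter is RL and no more transmissions. *)
Definition tx_slot (CWmax RL : nat) (w : outcome CWmax RL) (j : 'I_RL) : nat :=
  (\sum_(i < RL | (i <= j)%N) (w i : nat))%N.

Definition counter (CWmax RL : nat) (w : outcome CWmax RL) (t : nat) : nat :=
  #|[set j : 'I_RL | (tx_slot CWmax RL w j < t)%N]|.

Definition transmits (CWmax RL : nat) (w : outcome CWmax RL) (t : nat) : bool :=
  [exists j : 'I_RL, tx_slot CWmax RL w j == t].

Definition Pr_TX_given (R : realFieldType) (CWmin CWmax RL : nat) (t r : nat) : R :=
  Pr R CWmin CWmax RL [pred w : outcome CWmax RL | transmits CWmax RL w t && (counter CWmax RL w t == r)]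
  / Pr R CWmin CWmax RL [pred w : outcome CWmax RL | counter CWmax RL w t == r].

From HB Require Import structures.
From mathcomp Require Import all_boot all_order all_algebra.
From mathcomp Require Import zify.
Import Order.TTheory GRing.Theory Num.Theory.
Local Open Scope ring_scope.

(* The j-th transmission happens in slot S_j = K_0 + ... + K_j.  The generating
   function of S_j is the product of those of the uniform draws K_0, ..., K_j,
   and the recursion defining a(., j) is exactly multiplication by the last
   factor, so Pr(S_j = t) = a(t, j).  As K_j >= 1 for j > 0 the slots strictly
   increase, so transmitting in slot t with counter r is the event S_r = t, and
   the counter at t equals r iff S_(r-1) < t <= S_r, an event of probability
   Pr(S_(r-1) < t) - Pr(S_r < t) = b(t, r). *)

Lemma ltn_card_downclosed n (P : pred nat) k :
  (forall i j, (i <= j)%N -> P j -> P i) ->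
  (k < #|[set j : 'I_n | P j]|)%N = (k < n)%N && P k.
Proof.
move=> P_down.
have -> : #|[set j : 'I_n | P j]| = (\sum_(j < n) P j)%N.
  by rewrite -sum1_card big_mkcond; apply: eq_bigr => j _; rewrite inE; case: (P j).
elim: n k => [|n IHn] k; first by rewrite big_ord0.
rewrite big_ord_recr /=; have [Pn | nPn] := boolP (P n).
  rewrite (eq_bigr (fun=> 1%N)) => [|i _]; last by rewrite (P_down i n) // ltnW.
  rewrite sum1_card card_ord addn1 ltnS.
  by case: (boolP (k <= n)%N) => // /P_down ->.
rewrite addn0 IHn ltnS [in RHS]leq_eqVlt; case: eqP => [-> | _] //=.
by rewrite ltnn (negbTE nPn).
Qed.

Section Backoff.

Variables (R : realFieldType) (CWmin CWmax RL : nat).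
Hypotheses (CWmin_gt0 : (0 < CWmin)%N) (CWmin_le_max : (CWmin <= CWmax)%N)
  (RL_gt0 : (0 < RL)%N).

Local Notation cw := (CW CWmin CWmax).
Local Notation a := (a_fun R CWmin CWmax RL).
Local Notation wt := (weight R CWmin CWmax RL).
Local Notation prob := (Pr R CWmin CWmax RL).

Lemma CW_le_max i : (cw i <= CWmax)%N.
Proof. by case: i => //= i; rewrite geq_minl. Qed.

Lemma CW_gt0 i : (0 < cw i)%N.
Proof. by elim: i => //= i IH; rewrite leq_min; apply/andP; split; lia. Qed.

Definition draw_pmf (i k : nat) : R :=
  if valid_draw CWmin CWmax i k then (cw i)%:R^-1 else 0.

Definition draw_poly (i : nat) : {poly R} :=
  (cw i)%:R^-1 *: \sum_(k < cw i) 'X^(k + (i != 0%N)).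

Lemma coef_draw_poly i n : (draw_poly i)`_n = draw_pmf i n.
Proof.
rewrite /draw_poly.
have -> : \sum_(k < cw i) 'X^(k + (i != 0%N)) = 'X^(i != 0%N) * \poly_(k < cw i) 1 :> {poly R}.
  by rewrite poly_def mulr_sumr; apply: eq_bigr => k _; rewrite scale1r -exprD addnC.
rewrite coefZ coefXnM coef_poly /draw_pmf /valid_draw.
case: i => [|i] /=; first by rewrite subn0; case: ifP; rewrite ?mulr1 ?mulr0.
by case: n => [|n] /=; rewrite ?mulr0 // subn1 /=; case: ifP; rewrite ?mulr1 ?mulr0.
Qed.

Lemma draw_polyE i : draw_poly i = \sum_(k < CWmax.+1) draw_pmf i k *: 'X^k.
Proof.
rewrite -poly_def; apply/polyP => n; rewrite coef_poly coef_draw_poly.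
case: ltnP => // n_gt; rewrite /draw_pmf /valid_draw ifF //.
by have := CW_le_max i; case: i => [|i] /=; lia.
Qed.

Lemma sum_draw_pmf i : \sum_(k < CWmax.+1) draw_pmf i k = 1.
Proof.
transitivity (draw_poly i).[1].
  by rewrite draw_polyE horner_sum; apply: eq_bigr => k _; rewrite hornerZ hornerXn expr1n mulr1.
rewrite hornerZ horner_sum (eq_bigr (fun=> 1)) => [|k _]; last by rewrite hornerXn expr1n.
by rewrite sumr_const card_ord mulVf // pnatr_eq0 -lt0n CW_gt0.
Qed.

Lemma a_fun_neg r (t : int) : t < 0 -> a r t = 0.
Proof. by move=> t_lt0; case: r => [|r] /=; rewrite t_lt0. Qed.

Lemma a_fun_ge r (t : int) : (RL <= r)%N -> a r t = 0.
Proof. by case: r => [|r] r_ge /=; [lia | rewrite r_ge; case: ifP]. Qed.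

Lemma a_funS r (t : int) : 0 <= t -> (r.+1 < RL)%N ->
  a r.+1 t = (cw r.+1)%:R^-1 * \sum_(k < cw r.+1) a r (t - (cw r.+1 : int) + (k : int)).
Proof. by move=> t_ge0 r_lt /=; rewrite ltNge t_ge0 leqNgt r_lt. Qed.

Lemma coef_prod_draw_poly r n : (r < RL)%N -> (\prod_(i < r.+1) draw_poly i)`_n = a r n.
Proof.
elim: r n => [|r IHr] n r_lt.
  rewrite big_ord1 coef_draw_poly /draw_pmf /valid_draw /= ltz_nat.
  by case: ifP.
rewrite a_funS // big_ord_recr /= mulrC /draw_poly -scalerAl mulr_suml coefZ coef_sum.
congr (_ * _); rewrite [RHS](reindex_inj rev_ord_inj) /=; apply: eq_bigr => k _.
rewrite coefXnM; case: ltnP => n_ge; first by rewrite a_fun_neg //; have := ltn_ord k; lia.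
rewrite IHr; last lia.
by congr (a r _); have := ltn_ord k; lia.
Qed.

(* [tx_slot] with a [nat] index; [slot w j] is convertible to [tx_slot w j]. *)
Definition slot (w : outcome CWmax RL) (k : nat) : nat := \sum_(i < RL | (i <= k)%N) w i.

Lemma slot_generating_poly j : (j < RL)%N ->
  \sum_(w : outcome CWmax RL) wt w *: 'X^(slot w j) = \prod_(i < j.+1) draw_poly i.
Proof.
move=> j_lt.
have termE (w : outcome CWmax RL) : wt w *: 'X^(slot w j) =
    \prod_(i < RL) (draw_pmf i (w i) *: 'X^(if (i <= j)%N then w i : nat else 0%N)).
  rewrite scaler_prod /slot big_mkcond /=; congr (_ *: _).
  by rewrite (big_morph (fun n => 'X^n) (@exprD _ 'X) (expr0 'X)).
rewrite (eq_bigr _ (fun w _ => termE w)).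
rewrite -(bigA_distr_bigA (fun (i : 'I_RL) (k : 'I_CWmax.+1) =>
  draw_pmf i k *: 'X^(if (i <= j)%N then k : nat else 0%N))) /=.
rewrite (eq_bigr (fun i : 'I_RL => if (i <= j)%N then draw_poly i else 1)) => [|i _].
  by rewrite -big_mkcond (big_ord_widen _ _ j_lt); apply: eq_bigl => i; rewrite ltnS.
case: ifP => _; first by rewrite draw_polyE.
by rewrite -scaler_suml sum_draw_pmf scale1r.
Qed.

Lemma Pr_slot j t : (j < RL)%N -> prob [pred w | slot w j == t] = a j t.
Proof.
move=> j_lt; rewrite -coef_prod_draw_poly // -slot_generating_poly // coef_sum /Pr big_mkcond.
by apply: eq_bigr => w _; rewrite coefZ coefXn eq_sym /=; case: eqP; rewrite ?mulr1 ?mulr0.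
Qed.

Lemma eq_Pr (E1 E2 : pred (outcome CWmax RL)) : E1 =1 E2 -> prob E1 = prob E2.
Proof. exact: eq_bigl. Qed.

Lemma Pr_predT : prob predT = 1.
Proof.
rewrite /Pr -(bigA_distr_bigA (fun (i : 'I_RL) (k : 'I_CWmax.+1) => draw_pmf i k)) /=.
by rewrite big1 // => i _; rewrite sum_draw_pmf.
Qed.

Lemma Pr_setD (E1 E2 : pred (outcome CWmax RL)) : (forall w, E2 w -> E1 w) ->
  prob [pred w | E1 w && ~~ E2 w] = prob E1 - prob E2.
Proof.
move=> sub21; have -> : prob E1 = prob E2 + prob [pred w | E1 w && ~~ E2 w].
  rewrite /Pr (bigID E2) /=; congr (_ + _); apply: eq_bigl => w.
  by case E2w: (E2 w); rewrite ?andbT ?andbF ?sub21.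
by rewrite addrC addKr.
Qed.

Lemma Pr_ltn (x : outcome CWmax RL -> nat) t :
  prob [pred w | (x w < t)%N] = \sum_(i < t) prob [pred w | x w == i].
Proof.
rewrite /Pr; under [RHS]eq_bigr do rewrite big_mkcond.
rewrite exchange_big [LHS]big_mkcond /=; apply: eq_bigr => w _.
rewrite -big_mkcond (eq_bigl (fun i : 'I_t => i == x w :> nat)) => [|i]; last exact: eq_sym.
by rewrite (big_ord1_eq _ (fun=> wt w)).
Qed.

Definition valid (w : outcome CWmax RL) : bool :=
  [forall i : 'I_RL, valid_draw CWmin CWmax i (w i)].

Lemma eq_Pr_valid (E1 E2 : pred (outcome CWmax RL)) :
  (forall w, valid w -> E1 w = E2 w) -> prob E1 = prob E2.
Proof.
move=> E12; rewrite /Pr big_mkcond [RHS]big_mkcond; apply: eq_bigr => w _.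
have [/E12 -> // | /forallPn[i invalid_i]] := boolP (valid w).
by rewrite /weight (bigD1 i) //= (negbTE invalid_i) mul0r; case: ifP; case: ifP.
Qed.

Lemma slot_mono w : {homo slot w : k k' / (k <= k')%N}.
Proof.
move=> k k' le_kk'; rewrite /slot big_mkcond [X in (_ <= X)%N]big_mkcond.
by apply: leq_sum => i _; do 2 case: ifP => ? //; lia.
Qed.

Lemma slotS w k (k_lt : (k.+1 < RL)%N) : slot w k.+1 = slot w k + w (Ordinal k_lt).
Proof.
rewrite /slot (bigD1 (Ordinal k_lt)) //= addnC; congr (_ + _); apply: eq_bigl => i.
by rewrite -val_eqE /=; lia.
Qed.

Lemma slot_ltn w k k' : valid w -> (k < k')%N -> (k' < RL)%N -> (slot w k < slot w k')%N.
Proof.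
move=> valid_w; case: k' => // k' le_kk' k'_lt.
rewrite (slotS _ _ k'_lt) -addn1 leq_add ?slot_mono //.
by have := forallP valid_w (Ordinal k'_lt); rewrite /valid_draw /= => /andP[].
Qed.

Definition before w t k := (k < RL)%N && (slot w k < t)%N.

Lemma ltn_counter w t k : (k < counter CWmax RL w t)%N = before w t k.
Proof.
apply: (@ltn_card_downclosed _ (fun j => slot w j < t)%N) => i j le_ij.
exact/leq_ltn_trans/slot_mono.
Qed.

Lemma counter_slot w j : valid w -> (j < RL)%N -> counter CWmax RL w (slot w j) = j.
Proof.
move=> valid_w j_lt.
have ltn_counter_slot k : (k < counter CWmax RL w (slot w j))%N = (k < j)%N.
  rewrite ltn_counter /before; case: (ltnP k j) => [lt_kj | le_jk].
    by rewrite (ltn_trans lt_kj j_lt) slot_ltn.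
  by rewrite [(slot w k < _)%N]ltnNge slot_mono ?andbF.
have := ltn_counter_slot j; have := ltn_counter_slot (counter CWmax RL w (slot w j)).
by rewrite !ltnn; lia.
Qed.

Lemma transmits_counter w t r : valid w ->
  transmits CWmax RL w t && (counter CWmax RL w t == r) = (r < RL)%N && (slot w r == t).
Proof.
move=> valid_w; apply/andP/andP => [[/existsP[j /eqP <-] /eqP <-] | [r_lt /eqP <-]].
  by rewrite (counter_slot _ _ valid_w (ltn_ord j)).
by split; [apply/existsP; exists (Ordinal r_lt) | rewrite counter_slot].
Qed.

Lemma Pr_before k t : prob [pred w | before w t k] = \sum_(i < t) a k i.
Proof.
case: (ltnP k RL) => [k_lt | k_ge].
  rewrite (@eq_Pr _ [pred w | (slot w k < t)%N]) => [|w]; last by rewrite /= /before k_lt.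
  by rewrite Pr_ltn; apply: eq_bigr => i _; rewrite Pr_slot.
rewrite /Pr big_pred0 => [|w]; last by rewrite /= /before ltnNge k_ge.
by rewrite big1 // => i _; rewrite a_fun_ge.
Qed.

Lemma Pr_counter t r :
  prob [pred w | counter CWmax RL w t == r] = b_fun R CWmin CWmax RL t r.
Proof.
case: r => [|r].
  rewrite (@eq_Pr _ [pred w | predT w && ~~ before w t 0]) => [|w]; last first.
    by rewrite /= -ltn_counter; case: counter.
  by rewrite Pr_setD // Pr_predT Pr_before.
rewrite (@eq_Pr _ [pred w | before w t r && ~~ before w t r.+1]) => [|w]; last first.
  by rewrite /= -!ltn_counter eqn_leq -leqNgt andbC.
rewrite Pr_setD ?Pr_before => [|w /andP[r_lt slot_lt]]; first by rewrite /b_fun sumrB.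
by rewrite /before ltnW // (leq_ltn_trans (slot_mono w _ _ (leqnSn r))).
Qed.

Lemma Pr_transmits_counter t r :
  prob [pred w | transmits CWmax RL w t && (counter CWmax RL w t == r)] = a r t.
Proof.
rewrite (@eq_Pr_valid _ [pred w | (r < RL)%N && (slot w r == t)]) => [|w]; last first.
  exact: transmits_counter.
case: (ltnP r RL) => [r_lt | r_ge]; last by rewrite a_fun_ge // /Pr big_pred0.
by rewrite -Pr_slot //; apply: eq_Pr => w; rewrite /= r_lt.
Qed.

End Backoff.

Theorem lemma1 (R : realFieldType) (CWmin CWmax RL : nat) :
  (1 <= CWmin)%N -> (CWmin <= CWmax)%N -> (1 <= RL)%N ->
  forall t r : nat,
    0 < b_fun R CWmin CWmax RL t r ->
    Pr_TX_given R CWmin CWmax RL t r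
    = a_fun R CWmin CWmax RL r (t : int) / b_fun R CWmin CWmax RL t r.
Proof.
move=> CWmin_gt0 CWmin_le_max RL_gt0 t r _.
by rewrite /Pr_TX_given Pr_transmits_counter // Pr_counter.
Qed.
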